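(* Let $s\in [n]$ and $S_-=\sum_{m=1}^n \sigma_m^-$ on $(\mathbb{C}^2)^{\otimes n}$. Then $S_-^s$ has the bond dimension $s+1$ MPO representation \[ \langle i_1\cdots i_n|S_-^s|j_1\cdots j_n\rangle=\mathrm{tr}\big((\tilde O_s)_{i_1,j_1}\cdots(\tilde O_s)_{i_n,j_n}\tilde X_s\big)\quad\text{for all }i,j\in\{0,1\}^n, \] where the virtual space $\mathbb{C}^{s+1}$ is that of a spin-$s/2$ with orthonormal basis $\{|\tfrac s2,m\rangle: m=-\tfrac s2,\dots,\tfrac s2\}$, the boundary tensor is $\tilde{X}_s=|\tfrac{s}{2},-\tfrac{s}{2}\rangle\langle\tfrac{s}{2},\tfrac{s}{2}|$, and $(\tilde{O}_s)_{0,0}=(\tilde{O}_s)_{1,1}=I$, $(\tilde{O}_s)_{1,0}=0$, $(\tilde{O}_s)_{0,1}=J_+$. In particular, the states $|\Psi_s\rangle=S_-^s|\Psi\rangle$ have an MPS representation $|\Psi_s\rangle=|\Psi(\tilde{O}_s\diamond A,\tilde{X}_s\otimes X,n)\rangle$ with bond dimension $2(s+1)$.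
   Context: $\sigma^-_m=|0\rangle\langle1|$ acting on qubit $m$. $J_+$ is the spin raising operator on the spin-$j$ representation ($j=s/2$): $J_+|j,m\rangle=\sqrt{j(j+1)-m(m+1)}\,|j,m+1\rangle$ for $m<j$, $J_+|j,j\rangle=0$. With $\omega=e^{2\pi i/n}$, the one-magnon state $|\Psi\rangle=\overline{\omega}\sum_{r=1}^n\omega^r\sigma_r^-|1\rangle^{\otimes n}$ equals the MPS $|\Psi(A,X,n)\rangle=\sum_{i_1,\dots,i_n}\mathrm{tr}(A_{i_1}\cdots A_{i_n}X)|i_1\cdots i_n\rangle$ with $A_0=|1\rangle\langle0|$, $A_1=|0\rangle\langle0|+\omega|1\rangle\langle1|$, $X=|0\rangle\langle1|$. For an MPO tensor $O=\{O_{i,j}\}_{i,j\in\{0,1\}}$ and MPS tensor $A$, $O\diamond A$ is the MPS tensor $(O\diamond A)_i=\sum_{k}O_{i,k}\otimes A_k$. *)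

From HB Require Import structures.
From mathcomp Require Import all_boot all_order all_algebra.
From mathcomp Require Import reals trigo.
From mathcomp Require Import complex mxtens.
Unset Printing Implicit Defensive.
Import Order.TTheory GRing.Theory Num.Theory.
Local Open Scope ring_scope.
Local Open Scope complex_scope.

Section Defs.
Variable R : realType.
Local Notation C := R[i].

(* computational basis of (C^2)^{\otimes n}: i = (i_1..i_n), false = |0>, true = |1> *)
Definition bits (n : nat) := {ffun 'I_n -> bool}.

Definition qstate (n : nat) := bits n -> C.

Definition ket (n : nat) (j : bits n) : qstate n := fun i => (i == j)%:R.

Definition setbit n (i : bits n) (m : 'I_n) (b : bool) : bits n :=
  [ffun k => if k == m then b else i k].

(* sigma^-_m = |0><1| on qubit m *)
Definition sigma_minus n (m : 'I_n) (v : qstate n) : qstate n :=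
  fun i => if i m then 0 else v (setbit n i m true).

Definition Sminus n (v : qstate n) : qstate n :=
  fun i => \sum_(m < n) sigma_minus n m v i.

Definition Sminus_pow_elem n (s : nat) (i j : bits n) : C :=
  iter s (Sminus n) (ket n j) i.

Definition mxprod D n (M : 'I_n -> 'M[C]_D) : 'M[C]_D :=
  \big[mulmx/1%:M]_(k < n) M k.

Definition mps D (A : bool -> 'M[C]_D) (X : 'M[C]_D) n : qstate n :=
  fun i => \tr (mxprod D n (fun k => A (i k)) *m X).

Definition mpo D (O : bool -> bool -> 'M[C]_D) (X : 'M[C]_D) n (i j : bits n) : C :=
  \tr (mxprod D n (fun k => O (i k) (j k)) *m X).

(* spin-s/2 virtual space C^{s+1}: index k : 'I_(s+1) <-> |s/2, m> with m = k - s/2 *)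
Definition spin_j (s : nat) : R := s%:R / 2.
Definition spin_m (s : nat) (k : 'I_s.+1) : R := k%:R - spin_j s.

(* J_+ |j,m> = sqrt(j(j+1) - m(m+1)) |j,m+1> (and J_+|j,j> = 0) *)
Definition Jplus (s : nat) : 'M[C]_s.+1 :=
  \matrix_(a, b) (if a == b.+1 :> nat
                  then (Num.sqrt (spin_j s * (spin_j s + 1)
                                  - spin_m s b * (spin_m s b + 1)))%:C
                  else 0).

Definition Otilde (s : nat) (a b : bool) : 'M[C]_s.+1 :=
  match a, b with
  | false, false => 1%:M
  | true, true => 1%:M
  | true, false => 0
  | false, true => Jplus s
  end.

(* X~_s = |s/2,-s/2><s/2,s/2| *)
Definition Xtilde (s : nat) : 'M[C]_s.+1 := delta_mx ord0 ord_max.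

Definition diamond D E (O : bool -> bool -> 'M[C]_D) (A : bool -> 'M[C]_E)
  (a : bool) : 'M[C]_(D * E) :=
  \sum_(k : bool) tensmx (O a k) (A k).

Definition omega (n : nat) : C :=
  (cos (2 * pi / n%:R))%:C + 'i * (sin (2 * pi / n%:R))%:C.

(* qubit basis |0>, |1> as 'I_2 *)
Definition A_mag (n : nat) (b : bool) : 'M[C]_2 :=
  if b then delta_mx 0 0 + omega n *: delta_mx 1 1
  else delta_mx 1 0.
Definition X_mag : 'M[C]_2 := delta_mx 0 1.

Definition all_ones n : bits n := [ffun => true].

Definition Psi_magnon (n : nat) : qstate n :=
  fun i => conjc (omega n) *
           \sum_(r < n) omega n ^+ r.+1 * sigma_minus n r (ket n (all_ones n)) i.

End Defs.

(** The matrix element <i|S_-^s|j> equals s! if i <= j bitwise and j has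
    exactly s more ones than i, and 0 otherwise: the s lowered qubits can be
    lowered in any of s! orders.  On the MPO side the ordered product of the
    O_{i_k j_k} vanishes as soon as some i_k = 1, j_k = 0, and is otherwise
    J_+^t with t the number of lowered qubits; the boundary X_s extracts the
    entry <s/2,s/2| J_+^t |s/2,-s/2>, nonzero only for t = s, where it is
    prod_(k < s) sqrt((s - k)(k + 1)) = s!.  The MPS claim follows by
    linearity: S_-^s |Psi> = sum_j <.|S_-^s|j> Psi_j, the trace of a tensor
    product of matrix products factors, and (A, X) is an MPS for |Psi>. *)

From HB Require Import structures.
From mathcomp Require Import all_boot all_order all_algebra.
From mathcomp Require Import reals trigo.
From mathcomp Require Import complex mxtens.
From mathcomp Require Import ring.
Import Order.TTheory GRing.Theory Num.Theory.
Local Open Scope ring_scope.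

Section MatrixFacts.
Variable K : comPzRingType.

Lemma mxtrace_mul_delta m (M : 'M[K]_m) a b : \tr (M *m delta_mx a b) = M b a.
Proof.
rewrite /mxtrace (bigD1 b) //= big1 ?addr0.
  rewrite mxE (bigD1 a) //= big1 ?addr0; first by rewrite mxE !eqxx mulr1.
  by move=> k /negbTE kb; rewrite mxE kb mulr0.
by move=> k /negbTE kb; rewrite mxE big1 // => l _; rewrite mxE kb andbF mulr0.
Qed.

Lemma tensmx11 m p : (1%:M : 'M[K]_m) *t (1%:M : 'M[K]_p) = 1%:M.
Proof.
apply/matrixP => a b.
case: (mxtens_indexP a) => a1 a2; case: (mxtens_indexP b) => b1 b2.
rewrite tensmxE !mxE (can_eq (@mxtens_indexK _ _)) xpair_eqE.
by case: (a1 == b1); case: (a2 == b2); rewrite ?mulr1 ?mulr0.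
Qed.

Lemma big_mulmx_tensmx (I : Type) (r : seq I) m p
    (F : I -> 'M[K]_m) (G : I -> 'M[K]_p) :
  \big[mulmx/1%:M]_(k <- r) (F k *t G k) =
  (\big[mulmx/1%:M]_(k <- r) F k) *t (\big[mulmx/1%:M]_(k <- r) G k).
Proof.
elim: r => [|x r IH]; first by rewrite !big_nil tensmx11.
by rewrite !big_cons IH tensmx_mul.
Qed.

Lemma mxtrace_tensmx m p (A : 'M[K]_m) (B : 'M[K]_p) :
  \tr (A *t B) = \tr A * \tr B.
Proof. by rewrite /mxtrace mulr_sum; apply: eq_bigr => k _; rewrite mxE. Qed.

End MatrixFacts.

Lemma sqrtr_prod {K : rcfType} {m} {F : nat -> K} : (forall k, 0 <= F k) ->
  \prod_(k < m) Num.sqrt (F k) = Num.sqrt (\prod_(k < m) F k).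
Proof.
move=> F_ge0; elim: m => [|m IH]; first by rewrite !big_ord0 sqrtr1.
by rewrite !big_ord_recr /= IH sqrtrM // prodr_ge0.
Qed.

Local Open Scope complex_scope.

Section LoweringPowers.
Variables (R : realType) (n : nat).
Local Notation C := R[i].

Definition bits_le (i j : bits n) := [forall k, i k ==> j k].

Definition bits_lowered (i j : bits n) := #|[pred k | j k && ~~ i k]|.

Lemma bits_le_setbit (i j : bits n) m : i m = false ->
  bits_le (setbit n i m true) j = j m && bits_le i j.
Proof.
move=> im; apply/forallP/andP => [le_ij|[jm /forallP le_ij] k].
  split; first by have := le_ij m; rewrite /setbit ffunE eqxx.
  apply/forallP => k; have := le_ij k; rewrite /setbit ffunE.
  by case: eqP => [->|//]; rewrite im.
by rewrite /setbit ffunE; case: eqP => [->|_]; [rewrite jm | exact: le_ij].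
Qed.

Lemma bits_lowered_setbit (i j : bits n) m : i m = false -> j m ->
  bits_lowered i j = (bits_lowered (setbit n i m true) j).+1.
Proof.
move=> im jm; rewrite /bits_lowered (cardD1 m) inE jm im /= add1n; congr _.+1.
apply: eq_card => k; rewrite !inE /setbit ffunE.
by case: eqP => [->|_] /=; rewrite ?andbF.
Qed.

Lemma bits_le_lowered0 (i j : bits n) :
  bits_le i j && (bits_lowered i j == 0%N) = (i == j).
Proof.
apply/andP/eqP => [[/forallP le_ij /eqP/card0_eq none]|->].
  apply/ffunP => k; have := le_ij k; have := none k; rewrite !inE.
  by case: (i k); case: (j k).
split; first by apply/forallP => k; apply/implyP.
by apply/eqP/eq_card0 => k; rewrite !inE andbN.
Qed.

Lemma Sminus_iter_ket s (i j : bits n) :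
  iter s (Sminus R n) (ket R n j) i =
  if bits_le i j && (bits_lowered i j == s) then (s`!)%:R else 0.
Proof.
elim: s i => [|s IH] i /=.
  by rewrite bits_le_lowered0 /ket; case: (i == j).
pose G : C := if bits_le i j && (bits_lowered i j == s.+1) then (s`!)%:R else 0.
transitivity (\sum_(m < n) if j m && ~~ i m then G else 0).
  apply: eq_bigr => m _; rewrite /sigma_minus.
  case im: (i m) => /=; first by rewrite andbF.
  rewrite IH bits_le_setbit //; case jm: (j m) => //=.
  by rewrite /G (bits_lowered_setbit _ _ _ im jm) eqSS.
rewrite -big_mkcond /= sumr_const /G.
case: ifP => [/andP[_ /eqP lowered]|_]; last by rewrite mul0rn.
by rewrite -[#|_|]/(bits_lowered i j) lowered factS mulnC natrM mulr_natr.
Qed.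

Lemma Sminus_iter_linear s (v : qstate R n) i :
  iter s (Sminus R n) v i = \sum_j iter s (Sminus R n) (ket R n j) i * v j.
Proof.
elim: s i => [|s IH] i /=.
  rewrite /ket (bigD1 i) //= eqxx mul1r big1 ?addr0 // => j /negbTE ji.
  by rewrite eq_sym ji mul0r.
rewrite {1}/Sminus /sigma_minus.
under [RHS]eq_bigr do rewrite /Sminus /sigma_minus mulr_suml.
rewrite exchange_big /=; apply: eq_bigr => m _.
by case: (i m); [rewrite big1 // => j _; rewrite mul0r | exact: IH].
Qed.

Lemma has_bits_gt (i j : bits n) :
  has (fun k => i k && ~~ j k) (index_enum 'I_n) = ~~ bits_le i j.
Proof.
rewrite /bits_le negb_forall; apply/hasP/existsP => [[k _ ij_k]|[k ij_k]].
  by exists k; move: ij_k; case: (i k); case: (j k).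
by exists k => //; move: ij_k; case: (i k); case: (j k).
Qed.

Lemma count_bits_lowered (i j : bits n) :
  count (fun k => ~~ i k && j k) (index_enum 'I_n) = bits_lowered i j.
Proof.
rewrite /bits_lowered -sum1_count -sum1_card.
by apply: eq_bigl => k; rewrite inE andbC.
Qed.

End LoweringPowers.

Arguments bits_le {n}.
Arguments bits_lowered {n}.

Section SpinRaising.
Variables (R : realType) (s : nat).
Local Notation C := R[i].
Local Notation J := (Jplus R s).

Lemma Otilde_prod (I : Type) (r : seq I) (a b : I -> bool) :
  \big[mulmx/1%:M]_(k <- r) Otilde R s (a k) (b k) =
  if has (fun k => a k && ~~ b k) r then 0
  else J ^+ count (fun k => ~~ a k && b k) r.
Proof.
elim: r => [|x r IH]; first by rewrite big_nil /= expr0.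
rewrite big_cons IH /=.
case: (a x); case: (b x) => /=; rewrite ?mul1mx ?mul0mx //.
by case: ifP; rewrite ?mulmx0 // exprS mulmxE.
Qed.

Definition raising_coef (k : nat) : C :=
  (Num.sqrt (spin_j R s * (spin_j R s + 1)
             - (k%:R - spin_j R s) * (k%:R - spin_j R s + 1)))%:C.

(* [spin_ket k] is |s/2, k - s/2>; it is the zero vector for k > s, so that
   [Jplus_spin_ket] also covers J_+ |s/2, s/2> = 0. *)
Definition spin_ket (k : nat) : 'cV[C]_s.+1 := \col_a ((a : nat) == k)%:R.

Lemma Jplus_spin_ket k : J *m spin_ket k = raising_coef k *: spin_ket k.+1.
Proof.
apply/matrixP => a z; rewrite !mxE.
case: (ltnP k s.+1) => [lt_ks|le_sk].
  rewrite (bigD1 (Ordinal lt_ks)) //= big1 ?addr0.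
    by rewrite !mxE eqxx mulr1 /=; case: eqP; rewrite ?mulr1 ?mulr0.
  move=> l /eqP ne; rewrite !mxE.
  suff /negbTE -> : (l : nat) != k by rewrite mulr0.
  by apply/eqP => e; apply: ne; exact: val_inj.
rewrite big1 => [|l _]; last first.
  rewrite !mxE; suff /negbTE -> : (l : nat) != k by rewrite mulr0.
  by rewrite neq_ltn (leq_trans (ltn_ord l)).
case: eqP => [ea|]; rewrite ?mulr0 //.
by move: (ltn_ord a); rewrite ea ltnS ltnNge ltnW.
Qed.

Lemma Jplus_pow_entry t :
  (J ^+ t) ord_max ord0 = (\prod_(k < t) raising_coef k) * (s == t)%:R.
Proof.
have J_pow_ket0 : J ^+ t *m spin_ket 0 = (\prod_(k < t) raising_coef k) *: spin_ket t.
  elim: t => [|t IH]; first by rewrite expr0 big_ord0 scale1r mul1mx.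
  rewrite exprS -mulmxE -mulmxA IH -scalemxAr Jplus_spin_ket scalerA.
  by rewrite big_ord_recr /= mulrC.
transitivity ((J ^+ t *m spin_ket 0) ord_max ord0); last first.
  by rewrite J_pow_ket0 !mxE /= eq_sym.
rewrite mxE (bigD1 ord0) //= big1 ?addr0; first by rewrite mxE eqxx mulr1.
by move=> k /negbTE; rewrite mxE -val_eqE /= => ->; rewrite mulr0.
Qed.

(* With m = k - s/2 and j = s/2: j(j+1) - m(m+1) = (s - k)(k + 1). *)
Lemma raising_coefE k : (k < s)%N ->
  raising_coef k = (Num.sqrt (((s - k) * k.+1)%N%:R : R))%:C.
Proof.
move=> lt_ks; rewrite /raising_coef natrM natrB ?(ltnW lt_ks) //.
by rewrite /spin_j -addn1 natrD; congr ((Num.sqrt _)%:C); field.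
Qed.

Lemma prod_raising_coef : \prod_(k < s) raising_coef k = (s`!)%:R.
Proof.
rewrite (eq_bigr _ (fun (k : 'I_s) _ => raising_coefE _ (ltn_ord k))).
rewrite -(big_morph _ (rmorphM (@real_complex R)) (rmorph1 _)).
rewrite (sqrtr_prod (fun k => ler0n _ ((s - k) * k.+1))).
rewrite -natr_prod big_split /= -ffact_prod ffactnn.
rewrite (_ : (\prod_(k < s) k.+1)%N = s`!); last first.
  by rewrite fact_prod big_add1 /= big_mkord.
by rewrite natrM -expr2 sqrtr_sqr ger0_norm ?ler0n // rmorph_nat.
Qed.

End SpinRaising.

Lemma Sminus_pow_mpo (R : realType) n s (i j : bits n) :
  Sminus_pow_elem R n s i j = mpo R s.+1 (Otilde R s) (Xtilde R s) n i j.
Proof.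
rewrite /Sminus_pow_elem Sminus_iter_ket /mpo /mxprod /Xtilde mxtrace_mul_delta.
rewrite (Otilde_prod _ _ _ _ (fun k => i k) (fun k => j k)).
rewrite has_bits_gt count_bits_lowered.
case: (bits_le i j) => /=; last by rewrite mxE.
rewrite Jplus_pow_entry eq_sym.
case: eqP => [<-|_]; last by rewrite mulr0.
by rewrite mulr1 prod_raising_coef.
Qed.

Section Magnon.
Variables (R : realType) (n : nat).
Local Notation C := R[i].
Local Notation w := (omega R n).

Lemma mul_conj_omega : conjc w * w = 1.
Proof.
rewrite /omega; set c := cos _; set sn := sin _.
have c2s2 : c ^+ 2 + sn ^+ 2 = 1 by rewrite /c /sn cos2Dsin2.
by simpc; rewrite -!expr2 c2s2 [sn * c]mulrC subrr.
Qed.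

Lemma A_mag_prod00 (I : Type) (r : seq I) (f : I -> bool) :
  (\big[mulmx/1%:M]_(k <- r) A_mag R n (f k)) 0 0 = (all f r)%:R.
Proof.
elim: r => [|x r IH]; first by rewrite big_nil !mxE.
rewrite big_cons !mxE !big_ord_recl big_ord0 addr0 /=.
have -> : lift ord0 ord0 = 1 :> 'I_2 by apply: val_inj.
have -> : ord0 = 0 :> 'I_2 by apply: val_inj.
rewrite IH /A_mag; case: (f x); rewrite /= !mxE /=; last by rewrite !mul0r addr0.
by rewrite !mulr0 addr0 add0r mul1r mul0r addr0.
Qed.

Lemma A_mag_prod10 (I : Type) (r : seq I) (f : I -> bool) :
  (\big[mulmx/1%:M]_(k <- r) A_mag R n (f k)) 1 0 =
  if count (fun k => ~~ f k) r == 1%N then w ^+ index false (map f r) else 0.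
Proof.
elim: r => [|x r IH]; first by rewrite big_nil !mxE.
rewrite big_cons !mxE !big_ord_recl big_ord0 addr0 /=.
have -> : lift ord0 ord0 = 1 :> 'I_2 by apply: val_inj.
have -> : ord0 = 0 :> 'I_2 by apply: val_inj.
rewrite IH A_mag_prod00 /A_mag; case: (f x); rewrite /= !mxE /=.
  by rewrite mulr0 mulr1 !add0r mul0r add0n; case: ifP; rewrite ?mulr0 ?add0r // exprS.
rewrite mul1r mul0r addr0 add1n eqSS expr0.
rewrite (_ : all f r = (count (fun k => ~~ f k) r == 0%N)); first by case: eqP.
by rewrite eqn0Ngt -has_count (has_predC f) negbK.
Qed.

Lemma index_map_neq {j : bits n} {r0 : 'I_n} : (forall k, j k = (k != r0)) ->
  forall r, index false (map j r) = index r0 r.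
Proof.
move=> jE; elim => //= x r IH.
by rewrite jE IH; case: (x =P r0).
Qed.

Lemma Psi_magnonE (j : bits n) : Psi_magnon R n j =
  if #|[pred k | ~~ j k]| == 1%N then w ^+ index false (map j (enum 'I_n)) else 0.
Proof.
rewrite /Psi_magnon /sigma_minus /ket.
case: (@card1P _ [pred k | ~~ j k]) => [[r0 only_r0]|not_one].
  have jE k : j k = (k != r0) by have := only_r0 k; rewrite !inE => <-; rewrite negbK.
  rewrite (index_map_neq jE) index_enum_ord (bigD1 r0) //= big1 ?addr0.
    rewrite jE eqxx /=.
    have -> : setbit n j r0 true == all_ones n.
      by apply/eqP/ffunP => k; rewrite /setbit /all_ones !ffunE jE; case: (k =P r0).
    by rewrite mulr1 exprS mulrA mul_conj_omega mul1r.
  by move=> k /negbTE kr; rewrite jE kr /= mulr0.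
rewrite big1 ?mulr0 // => k _.
case jk: (j k) => /=; first by rewrite mulr0.
case: eqP => [raised|]; last by rewrite mulr0.
exfalso; apply: not_one; exists k => x; rewrite !inE.
case: (x =P k) => [->|ne]; first by rewrite jk.
have := congr1 (fun f : bits n => f x) raised; rewrite /setbit /all_ones !ffunE.
by case: eqP => // _ ->.
Qed.

Lemma mps_magnon (j : bits n) : mps R 2 (A_mag R n) (X_mag R) n j = Psi_magnon R n j.
Proof.
rewrite Psi_magnonE /mps /mxprod /X_mag mxtrace_mul_delta.
rewrite (A_mag_prod10 _ _ (fun k => j k)) -sum1_count -sum1_card.
by rewrite [index_enum _]unlock -enumT.
Qed.

End Magnon.

Theorem lemma17 (R : realType) (n s : nat) (hs1 : (1 <= s)%N) (hsn : (s <= n)%N) :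
  (forall i j : bits n,
      Sminus_pow_elem R n s i j = mpo R s.+1 (Otilde R s) (Xtilde R s) n i j) /\
  (forall i : bits n,
      iter s (Sminus R n) (Psi_magnon R n) i =
      mps R (s.+1 * 2) (diamond R s.+1 2 (Otilde R s) (A_mag R n))
          (tensmx (Xtilde R s) (X_mag R)) n i).
Proof.
split=> [|i]; first exact: Sminus_pow_mpo.
rewrite Sminus_iter_linear /mps /mxprod /diamond mulmxE bigA_distr_bigA.
rewrite -mulmxE mulmx_suml raddf_sum; apply: eq_bigr => j _.
rewrite big_mulmx_tensmx tensmx_mul /= mxtrace_tensmx -mps_magnon.
by rewrite -[iter _ _ _ _]/(Sminus_pow_elem R n s i j) Sminus_pow_mpo.
Qed.
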